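(* Let $X=\ell_\infty^{(3)}$ over $\mathbb{C}$, $V=\{z\in X: z_1+z_2+z_3=0\}$, and define $P:X\to V$ by $Pz=z-\frac{z_1+z_2+z_3}{3}(1,1,1)$. Then $P\in\mathcal{P}(X,V)$, $\|P\|_w=\|P\|=4/3$, and $P$ has minimal numerical radius among all elements of $\mathcal{P}(X,V)$. However, $P$ is not a strongly unique minimal projection with respect to the numerical radius: there is no $r>0$ such that $\|Q\|_w\ge\|P\|_w+r\|Q-P\|_w$ for all $Q\in\mathcal{P}(X,V)$ (equivalently, $0$ is not a strongly unique best approximation to $P$ in $B_V(X,V)=\{L\in B(X,V):L|_V=0\}$ with respect to $\|\cdot\|_w$).
   Context: $\ell_\infty^{(3)}$ is $\mathbb{C}^3$ with the max norm. $\mathcal{P}(X,V)$ is the set of linear projections from $X$ onto $V$ (linear $Q:X\to V$ with $Qv=v$ for $v\in V$). For an operator $T$ on $X$, $\|T\|$ is the operator norm and $\|T\|_w=\sup\{|x^*(Tx)|:x\in S_X,x^*\in S_{X^*},x^*(x)=1\}$ the numerical radius. *)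

From Stdlib Require Import Reals Lra Classical ClassicalEpsilon.
Open Scope R_scope.

Definition C : Type := (R * R)%type.
Definition Cre (z : C) : R := fst z.
Definition Cim (z : C) : R := snd z.
Definition RtoC (r : R) : C := (r, 0).
Definition C0 : C := (0, 0).
Definition C1 : C := (1, 0).
Definition Cadd (z w : C) : C := (fst z + fst w, snd z + snd w).
Definition Copp (z : C) : C := (- fst z, - snd z).
Definition Csub (z w : C) : C := Cadd z (Copp w).
Definition Cmul (z w : C) : C :=
  (fst z * fst w - snd z * snd w, fst z * snd w + snd z * fst w).
Definition Cmod (z : C) : R := sqrt (fst z ^ 2 + snd z ^ 2).

Definition X : Type := (C * C * C)%type.
Definition x1 (x : X) : C := fst (fst x).
Definition x2 (x : X) : C := snd (fst x).
Definition x3 (x : X) : C := snd x.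
Definition mkX (a b c : C) : X := (a, b, c).
Definition Xadd (x y : X) : X := mkX (Cadd (x1 x) (x1 y)) (Cadd (x2 x) (x2 y)) (Cadd (x3 x) (x3 y)).
Definition Xsub (x y : X) : X := mkX (Csub (x1 x) (x1 y)) (Csub (x2 x) (x2 y)) (Csub (x3 x) (x3 y)).
Definition Xscal (a : C) (x : X) : X := mkX (Cmul a (x1 x)) (Cmul a (x2 x)) (Cmul a (x3 x)).
Definition normX (x : X) : R := Rmax (Cmod (x1 x)) (Rmax (Cmod (x2 x)) (Cmod (x3 x))).

(* Supremum of a set of reals (least upper bound; chosen classically,
   arbitrary if no least upper bound exists). *)
Definition Rsup (E : R -> Prop) : R := epsilon (inhabits 0) (fun l => is_lub E l).

Definition is_linear_op (T : X -> X) : Prop :=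
  (forall x y, T (Xadd x y) = Xadd (T x) (T y)) /\
  (forall a x, T (Xscal a x) = Xscal a (T x)).
Definition is_linear_fun (f : X -> C) : Prop :=
  (forall x y, f (Xadd x y) = Cadd (f x) (f y)) /\
  (forall a x, f (Xscal a x) = Cmul a (f x)).

Definition opnorm (T : X -> X) : R :=
  Rsup (fun r => exists x, normX x = 1 /\ r = normX (T x)).
Definition dualnorm (f : X -> C) : R :=
  Rsup (fun r => exists x, normX x = 1 /\ r = Cmod (f x)).
Definition numrad (T : X -> X) : R :=
  Rsup (fun r => exists (x : X) (f : X -> C),
           normX x = 1 /\ is_linear_fun f /\ dualnorm f = 1 /\ f x = C1 /\
           r = Cmod (f (T x))).

Definition inV (z : X) : Prop := Cadd (Cadd (x1 z) (x2 z)) (x3 z) = C0.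

Definition is_proj_onto_V (Q : X -> X) : Prop :=
  is_linear_op Q /\ (forall x, inV (Q x)) /\ (forall v, inV v -> Q v = v).

Definition Pmin (z : X) : X :=
  let s := Cmul (RtoC (1/3)) (Cadd (Cadd (x1 z) (x2 z)) (x3 z)) in
  Xsub z (mkX s s s).

Definition opsub (S T : X -> X) : X -> X := fun x => Xsub (S x) (T x).

(* P = z |-> z - s(z) u with u = (1/3, 1/3, 1/3) and s(z) = z1 + z2 + z3.  Every map of
   this form with s(u) = 1 lies in P(X,V), and the i-th coordinate of its image is bounded
   by |1 - u_i| + 2 |u_i| times the norm, which gives ||P|| <= 4/3.  Conversely, let w_i
   have entry 1 at i and -1 elsewhere; since w_i + e_1 lies in V, every Q in P(X,V)
   satisfies Q w_i = w_i + e_1 - Q e_1 with Q e_1 in V, so the diagonal values x_i(Q w_i)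
   sum to 4 and ||Q||_w >= 4/3 >= ||P|| >= ||P||_w.  Finally, tilting u to
   (1/3 + i e, 1/3 - i e, 1/3) gives Q_e in P(X,V) with ||Q_e - P||_w >= 3e, while
   |2/3 - i e| and |1/3 + i e| exceed 2/3 and 1/3 only to second order in e, so
   ||Q_e||_w <= 4/3 + 15/4 e^2; no constant r > 0 survives e -> 0. *)

From Stdlib Require Import Reals Lra Psatz ClassicalEpsilon FunctionalExtensionality.
From Coquelicot Require Complex.
From Pilot Require Import Defs.
Open Scope R_scope.

Ltac unfold_ops :=
  unfold Xadd, Xsub, Xscal, mkX, x1, x2, x3, Csub, Cadd, Copp, Cmul, RtoC, C0, C1 in *;
  cbn [fst snd] in *.

Ltac componentwise := unfold_ops; repeat (apply pair_equal_spec; split).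

(* [Defs.C] and [Defs.Cmod] are convertible to Coquelicot's complex numbers and modulus. *)
Lemma Cmod_ge_0 z : 0 <= Cmod z.
Proof. exact (Complex.Cmod_ge_0 z). Qed.

Lemma Cmod_mul z w : Cmod (Cmul z w) = Cmod z * Cmod w.
Proof. exact (Complex.Cmod_mult z w). Qed.

Lemma Cmod_add_le z w : Cmod (Cadd z w) <= Cmod z + Cmod w.
Proof. exact (Complex.Cmod_triangle z w). Qed.

Lemma Cmod_opp z : Cmod (Copp z) = Cmod z.
Proof. exact (Complex.Cmod_opp z). Qed.

Lemma Cmod_real a : Cmod (a, 0) = Rabs a.
Proof. exact (Complex.Cmod_R a). Qed.

Lemma Cmod_eq_0 z : Cmod z = 0 -> z = C0.
Proof. exact (Complex.Cmod_eq_0 z). Qed.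

Lemma re_le_Cmod z : fst z <= Cmod z.
Proof.
  pose proof (Complex.Rmax_Cmod z : Rmax _ _ <= Cmod z); pose proof (Rle_abs (fst z)).
  pose proof (Rmax_l (Rabs (fst z)) (Rabs (snd z))); lra.
Qed.

Lemma abs_im_le_Cmod z : Rabs (snd z) <= Cmod z.
Proof.
  pose proof (Complex.Rmax_Cmod z : Rmax _ _ <= Cmod z).
  pose proof (Rmax_r (Rabs (fst z)) (Rabs (snd z))); lra.
Qed.

Lemma Cmod_le_quadratic a b : 0 < a -> Cmod (a, b) <= a + b ^ 2 / (2 * a).
Proof.
  intros Ha. assert (Hq : 0 <= b ^ 2 / (2 * a)).
  { apply Rmult_le_pos; [nra | left; apply Rinv_0_lt_compat; lra]. }
  unfold Cmod; cbn [fst snd].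
  rewrite <- (sqrt_pow2 (a + b ^ 2 / (2 * a))) by lra.
  apply sqrt_le_1_alt.
  replace ((a + b ^ 2 / (2 * a)) ^ 2) with (a ^ 2 + b ^ 2 + (b ^ 2 / (2 * a)) ^ 2)
    by (field; lra).
  nra.
Qed.

Lemma Cmod_add_le_2 a b M : Cmod a <= M -> Cmod b <= M -> Cmod (Cadd a b) <= 2 * M.
Proof. intros Ha Hb. pose proof (Cmod_add_le a b). lra. Qed.

(* [a - s u = (1 - u) a - (s - a) u] *)
Lemma Cmod_sub_mul_le a s u M :
  Cmod a <= M -> Cmod (Csub s a) <= 2 * M ->
  Cmod (Csub a (Cmul s u)) <= (Cmod (Csub C1 u) + 2 * Cmod u) * M.
Proof.
  intros Ha Hsa.
  replace (Csub a (Cmul s u)) with (Cadd (Cmul (Csub C1 u) a) (Copp (Cmul (Csub s a) u)))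
    by (destruct a, s, u; componentwise; ring).
  eapply Rle_trans; [apply Cmod_add_le|].
  rewrite Cmod_opp, !Cmod_mul.
  pose proof (Cmod_ge_0 (Csub C1 u)); pose proof (Cmod_ge_0 u); nra.
Qed.

Lemma normX_ge_x1 x : Cmod (x1 x) <= normX x.
Proof. apply Rmax_l. Qed.

Lemma normX_ge_x2 x : Cmod (x2 x) <= normX x.
Proof. eapply Rle_trans; [apply Rmax_l | apply Rmax_r]. Qed.

Lemma normX_ge_x3 x : Cmod (x3 x) <= normX x.
Proof. eapply Rle_trans; [apply Rmax_r | apply Rmax_r]. Qed.

Lemma normX_ge_0 x : 0 <= normX x.
Proof. eapply Rle_trans; [apply Cmod_ge_0 | apply normX_ge_x1]. Qed.

Lemma normX_le x B :
  Cmod (x1 x) <= B -> Cmod (x2 x) <= B -> Cmod (x3 x) <= B -> normX x <= B.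
Proof. intros; unfold normX; repeat apply Rmax_lub; assumption. Qed.

Lemma normX_add_le x y : normX (Xadd x y) <= normX x + normX y.
Proof.
  apply normX_le; eapply Rle_trans; try apply Cmod_add_le; apply Rplus_le_compat;
    auto using normX_ge_x1, normX_ge_x2, normX_ge_x3.
Qed.

Lemma normX_scal c x : normX (Xscal c x) = Cmod c * normX x.
Proof.
  unfold normX, Xscal, mkX, x1, x2, x3; cbn [fst snd].
  rewrite !Cmod_mul, !RmaxRmult by apply Cmod_ge_0. reflexivity.
Qed.

Lemma normX_eq_0 x : normX x = 0 -> x = mkX C0 C0 C0.
Proof.
  intros Hx.
  assert (H1 : Cmod (x1 x) = 0)
    by (pose proof (normX_ge_x1 x); pose proof (Cmod_ge_0 (x1 x)); lra).
  assert (H2 : Cmod (x2 x) = 0)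
    by (pose proof (normX_ge_x2 x); pose proof (Cmod_ge_0 (x2 x)); lra).
  assert (H3 : Cmod (x3 x) = 0)
    by (pose proof (normX_ge_x3 x); pose proof (Cmod_ge_0 (x3 x)); lra).
  apply Cmod_eq_0 in H1, H2, H3.
  destruct x as [[a b] c]; unfold x1, x2, x3 in *; cbn [fst snd] in *; subst; reflexivity.
Qed.

Lemma normX_unimodular a b c :
  Cmod a = 1 -> Cmod b = 1 -> Cmod c = 1 -> normX (mkX a b c) = 1.
Proof.
  intros Ha Hb Hc. unfold normX, mkX, x1, x2, x3; cbn [fst snd].
  rewrite Ha, Hb, Hc. unfold Rmax; repeat destruct Rle_dec; lra.
Qed.

Definition e1 : X := mkX C1 C0 C0.
Definition e2 : X := mkX C0 C1 C0.
Definition e3 : X := mkX C0 C0 C1.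
Definition ones : X := mkX C1 C1 C1.

Lemma normX_ones : normX ones = 1.
Proof. apply normX_unimodular; unfold C1; rewrite Cmod_real; apply Rabs_R1. Qed.

Lemma X_decomp x : x = Xadd (Xadd (Xscal (x1 x) e1) (Xscal (x2 x) e2)) (Xscal (x3 x) e3).
Proof. destruct x as [[[a1 a2] [b1 b2]] [c1 c2]]; unfold e1, e2, e3; componentwise; ring. Qed.

Lemma linear_fun_bound f : is_linear_fun f -> forall x,
  Cmod (f x) <= normX x * (Cmod (f e1) + Cmod (f e2) + Cmod (f e3)).
Proof.
  intros [Hadd Hscal] x. rewrite (X_decomp x) at 1. rewrite !Hadd, !Hscal.
  eapply Rle_trans; [apply Cmod_add_le|].
  eapply Rle_trans; [apply Rplus_le_compat_r, Cmod_add_le|].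
  rewrite !Cmod_mul.
  pose proof (normX_ge_x1 x); pose proof (normX_ge_x2 x); pose proof (normX_ge_x3 x).
  pose proof (Cmod_ge_0 (f e1)); pose proof (Cmod_ge_0 (f e2)); pose proof (Cmod_ge_0 (f e3)).
  nra.
Qed.

Lemma linear_op_bound T : is_linear_op T -> forall x,
  normX (T x) <= normX x * (normX (T e1) + normX (T e2) + normX (T e3)).
Proof.
  intros [Hadd Hscal] x. rewrite (X_decomp x) at 1. rewrite !Hadd, !Hscal.
  eapply Rle_trans; [apply normX_add_le|].
  eapply Rle_trans; [apply Rplus_le_compat_r, normX_add_le|].
  rewrite !normX_scal.
  pose proof (normX_ge_x1 x); pose proof (normX_ge_x2 x); pose proof (normX_ge_x3 x).
  pose proof (normX_ge_0 (T e1)); pose proof (normX_ge_0 (T e2)); pose proof (normX_ge_0 (T e3)).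
  nra.
Qed.

Lemma linear_fun_zero f : is_linear_fun f -> f (mkX C0 C0 C0) = C0.
Proof.
  intros [_ Hscal].
  replace (mkX C0 C0 C0) with (Xscal C0 (mkX C0 C0 C0)) by (componentwise; ring).
  rewrite Hscal. destruct (f (mkX C0 C0 C0)). componentwise; ring.
Qed.

Lemma opsub_linear S T : is_linear_op S -> is_linear_op T -> is_linear_op (opsub S T).
Proof.
  intros [Sadd Sscal] [Tadd Tscal]. unfold opsub. split.
  - intros x y. rewrite Sadd, Tadd.
    destruct (S x) as [[[a1 a2] [b1 b2]] [c1 c2]], (S y) as [[[d1 d2] [f1 f2]] [g1 g2]],
      (T x) as [[[h1 h2] [i1 i2]] [j1 j2]], (T y) as [[[k1 k2] [l1 l2]] [m1 m2]].
    componentwise; ring.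
  - intros [q1 q2] x. rewrite Sscal, Tscal.
    destruct (S x) as [[[a1 a2] [b1 b2]] [c1 c2]], (T x) as [[[h1 h2] [i1 i2]] [j1 j2]].
    componentwise; ring.
Qed.

Lemma x1_linear : is_linear_fun x1. Proof. split; reflexivity. Qed.
Lemma x2_linear : is_linear_fun x2. Proof. split; reflexivity. Qed.
Lemma x3_linear : is_linear_fun x3. Proof. split; reflexivity. Qed.

Lemma Rsup_spec E : (exists r, E r) -> bound E -> is_lub E (Rsup E).
Proof.
  intros Hne Hb. unfold Rsup. apply epsilon_spec.
  destruct (completeness E Hb Hne) as [m Hm]. exists m; exact Hm.
Qed.

Lemma Rsup_le E B : (exists r, E r) -> (forall r, E r -> r <= B) -> Rsup E <= B.
Proof. intros Hne HB. exact (proj2 (Rsup_spec E Hne (ex_intro _ B HB)) B HB). Qed.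

Lemma Rsup_ge E r : bound E -> E r -> r <= Rsup E.
Proof. intros Hb Hr. exact (proj1 (Rsup_spec E (ex_intro _ r Hr) Hb) r Hr). Qed.

Lemma dualnorm_bound f : is_linear_fun f -> forall y, Cmod (f y) <= dualnorm f * normX y.
Proof.
  intros Hf y.
  destruct (Req_dec (normX y) 0) as [Hy0 | Hy0].
  { rewrite Hy0, (normX_eq_0 y Hy0), (linear_fun_zero f Hf).
    unfold C0; rewrite Cmod_real, Rabs_R0; lra. }
  pose proof (normX_ge_0 y) as Hy. set (n := normX y) in *.
  assert (Hinv : Cmod (RtoC (/ n)) = / n).
  { unfold RtoC; rewrite Cmod_real. apply Rabs_right, Rle_ge, Rlt_le, Rinv_0_lt_compat; lra. }
  set (z := Xscal (RtoC (/ n)) y).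
  assert (Hz : normX z = 1) by (unfold z; rewrite normX_scal, Hinv; fold n; field; lra).
  assert (Hfz : Cmod (f z) <= dualnorm f).
  { apply Rsup_ge; [|exists z; split; [exact Hz | reflexivity]].
    exists (Cmod (f e1) + Cmod (f e2) + Cmod (f e3)). intros r [x [Hx ->]].
    pose proof (linear_fun_bound f Hf x) as Hb. rewrite Hx in Hb. lra. }
  unfold z in Hfz. rewrite (proj2 Hf), Cmod_mul, Hinv in Hfz.
  apply (Rmult_le_compat_l n) in Hfz; [|lra].
  rewrite <- Rmult_assoc, Rinv_r in Hfz by lra. lra.
Qed.

Lemma dualnorm_eq_1 f : f ones = C1 -> (forall x, Cmod (f x) <= normX x) -> dualnorm f = 1.
Proof.
  intros Hones Hf.
  assert (Hone : Cmod (f ones) = 1) by (rewrite Hones; unfold C1; rewrite Cmod_real; apply Rabs_R1).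
  apply Rle_antisym.
  - apply Rsup_le; [exists 1, ones; auto using normX_ones|].
    intros r [x [Hx ->]]. rewrite <- Hx. apply Hf.
  - apply Rsup_ge.
    + exists 1. intros r [x [Hx ->]]. rewrite <- Hx. apply Hf.
    + exists ones. auto using normX_ones.
Qed.

Lemma dualnorm_x1 : dualnorm x1 = 1.
Proof. exact (dualnorm_eq_1 x1 eq_refl normX_ge_x1). Qed.
Lemma dualnorm_x2 : dualnorm x2 = 1.
Proof. exact (dualnorm_eq_1 x2 eq_refl normX_ge_x2). Qed.
Lemma dualnorm_x3 : dualnorm x3 = 1.
Proof. exact (dualnorm_eq_1 x3 eq_refl normX_ge_x3). Qed.

Lemma opnorm_le T B : (forall x, normX x = 1 -> normX (T x) <= B) -> opnorm T <= B.
Proof.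
  intros HB. apply Rsup_le; [exists (normX (T ones)), ones; auto using normX_ones|].
  intros r [x [Hx ->]]. auto.
Qed.

Lemma opnorm_ge T x : is_linear_op T -> normX x = 1 -> normX (T x) <= opnorm T.
Proof.
  intros HT Hx. apply Rsup_ge; [|exists x; auto].
  exists (normX (T e1) + normX (T e2) + normX (T e3)). intros r [y [Hy ->]].
  pose proof (linear_op_bound T HT y) as Hb. rewrite Hy in Hb. lra.
Qed.

Lemma numrad_le T B : (forall x, normX x = 1 -> normX (T x) <= B) -> numrad T <= B.
Proof.
  intros HB. apply Rsup_le.
  - exists (Cmod (x1 (T ones))), ones, x1.
    auto using normX_ones, x1_linear, dualnorm_x1.
  - intros r [x [f [Hx [Hf [Hd [_ ->]]]]]].
    pose proof (dualnorm_bound f Hf (T x)) as Hb. rewrite Hd in Hb.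
    pose proof (HB x Hx). lra.
Qed.

Lemma numrad_ge T x f :
  is_linear_op T -> normX x = 1 -> is_linear_fun f -> dualnorm f = 1 -> f x = C1 ->
  Cmod (f (T x)) <= numrad T.
Proof.
  intros HT Hx Hf Hd Hfx. apply Rsup_ge; [|exists x, f; auto].
  exists (normX (T e1) + normX (T e2) + normX (T e3)).
  intros r [y [g [Hy [Hg [Hgd [_ ->]]]]]].
  pose proof (dualnorm_bound g Hg (T y)) as Hb. rewrite Hgd in Hb.
  pose proof (linear_op_bound T HT y) as Hb'. rewrite Hy in Hb'. lra.
Qed.

Lemma numrad_le_opnorm T : is_linear_op T -> numrad T <= opnorm T.
Proof. intros HT. apply numrad_le. intros x Hx. exact (opnorm_ge T x HT Hx). Qed.

(** * Projections onto V along a direction *)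

Definition sum3 (z : X) : C := Cadd (Cadd (x1 z) (x2 z)) (x3 z).

Definition proj_along (u : X) (z : X) : X := Xsub z (Xscal (sum3 z) u).

Lemma proj_along_linear u : is_linear_op (proj_along u).
Proof.
  destruct u as [[[u1 u2] [v1 v2]] [w1 w2]]. unfold proj_along, sum3. split.
  - intros [[[a1 a2] [b1 b2]] [c1 c2]] [[[d1 d2] [f1 f2]] [g1 g2]]. componentwise; ring.
  - intros [k1 k2] [[[a1 a2] [b1 b2]] [c1 c2]]. componentwise; ring.
Qed.

Lemma sum3_proj_along u z :
  sum3 (proj_along u z) = Csub (sum3 z) (Cmul (sum3 z) (sum3 u)).
Proof.
  destruct u as [[[u1 u2] [v1 v2]] [w1 w2]], z as [[[a1 a2] [b1 b2]] [c1 c2]].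
  unfold proj_along, sum3. componentwise; ring.
Qed.

Lemma proj_along_is_proj u : sum3 u = C1 -> is_proj_onto_V (proj_along u).
Proof.
  intros Hu. split; [apply proj_along_linear | split].
  - intros z. change (sum3 (proj_along u z) = C0).
    rewrite sum3_proj_along, Hu. destruct (sum3 z). componentwise; ring.
  - intros v Hv. change (sum3 v = C0) in Hv. unfold proj_along. rewrite Hv.
    destruct u as [[[u1 u2] [v1 v2]] [w1 w2]], v as [[[a1 a2] [b1 b2]] [c1 c2]].
    componentwise; ring.
Qed.

Lemma proj_along_norm_le u K :
  Cmod (Csub C1 (x1 u)) + 2 * Cmod (x1 u) <= K ->
  Cmod (Csub C1 (x2 u)) + 2 * Cmod (x2 u) <= K ->
  Cmod (Csub C1 (x3 u)) + 2 * Cmod (x3 u) <= K ->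
  forall x, normX (proj_along u x) <= K * normX x.
Proof.
  intros K1 K2 K3 x.
  pose proof (normX_ge_x1 x); pose proof (normX_ge_x2 x); pose proof (normX_ge_x3 x).
  pose proof (normX_ge_0 x).
  destruct x as [[a b] c]; unfold x1, x2, x3 in *; cbn [fst snd] in *.
  apply normX_le; unfold proj_along, sum3, Xsub, Xscal, mkX, x1, x2, x3; cbn [fst snd];
    (eapply Rle_trans; [apply Cmod_sub_mul_le with (M := normX (a, b, c)); [eassumption|] |]).
  - replace (Csub (Cadd (Cadd a b) c) a) with (Cadd b c)
      by (destruct a, b, c; componentwise; ring).
    apply Cmod_add_le_2; assumption.
  - apply Rmult_le_compat_r; assumption.
  - replace (Csub (Cadd (Cadd a b) c) b) with (Cadd a c)
      by (destruct a, b, c; componentwise; ring).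
    apply Cmod_add_le_2; assumption.
  - apply Rmult_le_compat_r; assumption.
  - replace (Csub (Cadd (Cadd a b) c) c) with (Cadd a b)
      by (destruct a, b, c; componentwise; ring).
    apply Cmod_add_le_2; assumption.
  - apply Rmult_le_compat_r; assumption.
Qed.

Definition tilt (e : R) : X := mkX (1/3, e) (1/3, - e) (1/3, 0).

Lemma sum3_tilt e : sum3 (tilt e) = C1.
Proof. unfold sum3, tilt. componentwise; field. Qed.

Lemma tilt_norm_le e x : normX (proj_along (tilt e) x) <= (4/3 + 15/4 * e ^ 2) * normX x.
Proof.
  assert (Hbig : forall b, Cmod (2/3, b) <= 2/3 + 3/4 * b ^ 2)
    by (intros b; pose proof (Cmod_le_quadratic (2/3) b); lra).
  assert (Hsmall : forall b, Cmod (1/3, b) <= 1/3 + 3/2 * b ^ 2)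
    by (intros b; pose proof (Cmod_le_quadratic (1/3) b); lra).
  assert (Hcompl : forall b, Csub C1 (1/3, b) = (2/3, - b)) by (intros b; componentwise; field).
  pose proof (pow2_ge_0 e).
  apply proj_along_norm_le; unfold tilt, x1, x2, x3, mkX; cbn [fst snd]; rewrite Hcompl.
  - pose proof (Hbig (- e)); pose proof (Hsmall e); lra.
  - pose proof (Hbig (- - e)); pose proof (Hsmall (- e)); lra.
  - pose proof (Hbig (- 0)); pose proof (Hsmall 0); lra.
Qed.

Lemma Pmin_eq : Pmin = proj_along (tilt 0).
Proof.
  apply functional_extensionality. intros [[[a1 a2] [b1 b2]] [c1 c2]].
  unfold Pmin, proj_along, sum3, tilt. componentwise; field.
Qed.

Lemma Pmin_proj : is_proj_onto_V Pmin.
Proof. rewrite Pmin_eq. apply proj_along_is_proj, sum3_tilt. Qed.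

Lemma Pmin_norm_le x : normX (Pmin x) <= 4/3 * normX x.
Proof.
  rewrite Pmin_eq. replace (4/3) with (4/3 + 15/4 * 0 ^ 2) by ring. apply tilt_norm_le.
Qed.

(** * Minimality of the numerical radius *)

Definition w1 : X := mkX (1, 0) (-1, 0) (-1, 0).
Definition w2 : X := mkX (-1, 0) (1, 0) (-1, 0).
Definition w3 : X := mkX (-1, 0) (-1, 0) (1, 0).

Lemma normX_w1 : normX w1 = 1.
Proof. apply normX_unimodular; rewrite Cmod_real; unfold Rabs; destruct Rcase_abs; lra. Qed.
Lemma normX_w2 : normX w2 = 1.
Proof. apply normX_unimodular; rewrite Cmod_real; unfold Rabs; destruct Rcase_abs; lra. Qed.
Lemma normX_w3 : normX w3 = 1.
Proof. apply normX_unimodular; rewrite Cmod_real; unfold Rabs; destruct Rcase_abs; lra. Qed.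

Lemma proj_eq_sub Q w v : is_proj_onto_V Q -> inV (Xadd w v) -> Q w = Xsub (Xadd w v) (Q v).
Proof.
  intros [[Hadd _] [_ Hid]] Hwv. rewrite <- (Hid _ Hwv), Hadd.
  destruct (Q w) as [[[a1 a2] [b1 b2]] [c1 c2]], (Q v) as [[[d1 d2] [f1 f2]] [g1 g2]].
  componentwise; ring.
Qed.

(* Since w_i + e_1 lies in V, the value x_i(Q w_i) is determined up to the i-th entry of
   Q e_1, and these entries sum to zero. *)
Lemma proj_diag_re_sum Q : is_proj_onto_V Q ->
  fst (x1 (Q w1)) + fst (x2 (Q w2)) + fst (x3 (Q w3)) = 4.
Proof.
  intros HQ. pose proof (proj1 (proj2 HQ) e1) as He1. change (sum3 (Q e1) = C0) in He1.
  rewrite (proj_eq_sub Q w1 e1), (proj_eq_sub Q w2 e1), (proj_eq_sub Q w3 e1)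
    by (exact HQ || (unfold inV, w1, w2, w3, e1; componentwise; lra)).
  revert He1. unfold sum3, w1, w2, w3, e1.
  destruct (Q e1) as [[[a1 a2] [b1 b2]] [c1 c2]]. unfold_ops.
  intros Hs. apply pair_equal_spec in Hs as [Hre _]. lra.
Qed.

Lemma numrad_proj_ge Q : is_proj_onto_V Q -> 4/3 <= numrad Q.
Proof.
  intros HQ. pose proof (proj_diag_re_sum Q HQ) as Hsum. pose proof (proj1 HQ) as HL.
  pose proof (re_le_Cmod (x1 (Q w1))); pose proof (re_le_Cmod (x2 (Q w2)));
    pose proof (re_le_Cmod (x3 (Q w3))).
  pose proof (numrad_ge Q w1 x1 HL normX_w1 x1_linear dualnorm_x1 eq_refl).
  pose proof (numrad_ge Q w2 x2 HL normX_w2 x2_linear dualnorm_x2 eq_refl).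
  pose proof (numrad_ge Q w3 x3 HL normX_w3 x3_linear dualnorm_x3 eq_refl).
  lra.
Qed.

Lemma numrad_Pmin : numrad Pmin = 4/3.
Proof.
  apply Rle_antisym.
  - apply numrad_le. intros x Hx. rewrite <- (Rmult_1_r (4/3)), <- Hx. apply Pmin_norm_le.
  - exact (numrad_proj_ge Pmin Pmin_proj).
Qed.

Lemma opnorm_Pmin : opnorm Pmin = 4/3.
Proof.
  apply Rle_antisym.
  - apply opnorm_le. intros x Hx. rewrite <- (Rmult_1_r (4/3)), <- Hx. apply Pmin_norm_le.
  - rewrite <- numrad_Pmin. exact (numrad_le_opnorm Pmin (proj1 Pmin_proj)).
Qed.

(** * Failure of strong uniqueness *)

Lemma numrad_tilt_sub_ge e :
  0 <= e -> 3 * e <= numrad (opsub (proj_along (tilt e)) (proj_along (tilt 0))).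
Proof.
  intros He.
  assert (Hval : x1 (opsub (proj_along (tilt e)) (proj_along (tilt 0)) ones) = (0, - (3 * e)))
    by (unfold opsub, proj_along, sum3, tilt, ones; componentwise; field).
  eapply Rle_trans; [| apply (numrad_ge _ ones x1); auto using opsub_linear,
    proj_along_linear, normX_ones, x1_linear, dualnorm_x1].
  rewrite Hval. eapply Rle_trans; [| apply abs_im_le_Cmod]. cbn [snd].
  rewrite Rabs_Ropp, Rabs_right; lra.
Qed.

Lemma no_strong_uniqueness r : 0 < r ->
  exists Q, is_proj_onto_V Q /\ numrad Q < 4/3 + r * numrad (opsub Q Pmin).
Proof.
  intros Hr. set (e := r / 2). exists (proj_along (tilt e)).
  split; [apply proj_along_is_proj, sum3_tilt|].
  assert (Hnorm : numrad (proj_along (tilt e)) <= 4/3 + 15/4 * e ^ 2).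
  { apply numrad_le. intros x Hx. rewrite <- (Rmult_1_r (_ + _)), <- Hx. apply tilt_norm_le. }
  pose proof (numrad_tilt_sub_ge e ltac:(unfold e; lra)) as Hdist.
  rewrite Pmin_eq.
  pose proof (Rmult_le_compat_l r _ _ (Rlt_le _ _ Hr) Hdist).
  unfold e in *. nra.
Qed.

Theorem mainTheorem8 :
  is_proj_onto_V Pmin /\
  numrad Pmin = 4/3 /\ opnorm Pmin = 4/3 /\
  (forall Q, is_proj_onto_V Q -> numrad Pmin <= numrad Q) /\
  ~ (exists r : R, 0 < r /\
       forall Q, is_proj_onto_V Q ->
         numrad Q >= numrad Pmin + r * numrad (opsub Q Pmin)).
Proof.
  split; [exact Pmin_proj|]. split; [exact numrad_Pmin|]. split; [exact opnorm_Pmin|].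
  split.
  - intros Q HQ. rewrite numrad_Pmin. exact (numrad_proj_ge Q HQ).
  - intros [r [Hr Hstrong]].
    destruct (no_strong_uniqueness r Hr) as [Q [HQ HQlt]].
    specialize (Hstrong Q HQ). rewrite numrad_Pmin in Hstrong. lra.
Qed.
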